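(* For every $p\in\mathbb R^m$, $$H^+(p):=\min_{Q}\max_{w\in\Delta_K}\sum_{i=1}^m\sum_{a}w(a)D(Q_a\|\nu^i_a)p_i\;=\;H^-(p):=\max_{w\in\Delta_K}\min_{Q}\sum_{i=1}^m\sum_{a}w(a)D(Q_a\|\nu^i_a)p_i,$$ ($Q$ ranging over $(\Delta_{\mathcal X})^K$), and this common value $H(p)$ equals $$H(p)=\begin{cases}\max_{a\in[K]}-\big(\sum_i p_i\big)\log\Big(\sum_{x\in\mathcal X}\prod_{i=1}^m\nu^i_a(x)^{p_i/\sum_k p_k}\Big),&\text{if }\sum_ip_i>0,\\[2pt] \max_{a\in[K]}\min_{x\in\mathcal X}-\sum_ip_i\log\nu^i_a(x),&\text{if }\sum_ip_i\le0.\end{cases}$$ Moreover $H$ is Lipschitz continuous on $\mathbb R^m$ with Lipschitz constant $\sqrt m\log(1/\epsilon)$, and $H$ is non-decreasing in each coordinate $p_i$.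
   Context: $\mathcal X$ is a finite set, $\Delta_{\mathcal X}$ the probability distributions on $\mathcal X$, $\Delta_K$ the simplex on $[K]$, $D$ the KL divergence. Fix $m\ge2$ bandits $\nu^1,\dots,\nu^m$, $\nu^i=(\nu^i_a)_{a\in[K]}$, with $\nu^i_a\in\Delta_{\mathcal X}$ and $\nu^i_a(x)\ge\epsilon$ for all $i,a,x$, for some $\epsilon\in(0,1)$. *)

From HB Require Import structures.
From mathcomp Require Import all_boot all_order all_algebra.
From mathcomp Require Import all_classical all_reals all_analysis.
Set Implicit Arguments. Unset Strict Implicit. Unset Printing Implicit Defensive.
Import Order.TTheory GRing.Theory Num.Theory.
Local Open Scope classical_set_scope.
Local Open Scope ring_scope.

Section Defs.
Variable R : realType.

Definition is_dist (T : finType) (q : T -> R) : Prop :=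
  (forall t, 0 <= q t) /\ \sum_(t : T) q t = 1.

Definition KL (X : finType) (q r : X -> R) : R :=
  \sum_(x : X) (if q x == 0 then 0 else q x * ln (q x / r x)).

Variables (X : finType) (m K : nat) (nu : 'I_m -> 'I_K -> X -> R).

Definition obj (p : 'I_m -> R) (Q : 'I_K -> X -> R) (w : 'I_K -> R) : R :=
  \sum_(i < m) \sum_(a < K) w a * KL (Q a) (nu i a) * p i.

Definition is_Q (Q : 'I_K -> X -> R) : Prop := forall a, is_dist (Q a).

(* H^+(p) = min_Q max_w obj, H^-(p) = max_w min_Q obj (as inf/sup; attainment
   is asserted separately in the theorem) *)
Definition Hplus (p : 'I_m -> R) : R :=
  inf [set v | exists2 Q, is_Q Q &
         v = sup [set u | exists2 w, is_dist w & u = obj p Q w]].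

Definition Hminus (p : 'I_m -> R) : R :=
  sup [set v | exists2 w, is_dist w &
         v = inf [set u | exists2 Q, is_Q Q & u = obj p Q w]].

Definition Hform (p : 'I_m -> R) : R :=
  let s := \sum_(k < m) p k in
  if 0 < s then
    sup (range (fun a : 'I_K =>
       - s * ln (\sum_(x : X) \prod_(i < m) (nu i a x) `^ (p i / s))))
  else
    sup (range (fun a : 'I_K =>
       inf (range (fun x : X => - \sum_(i < m) p i * ln (nu i a x))))).

End Defs.

From HB Require Import structures.
From mathcomp Require Import all_boot all_order all_algebra.
From mathcomp Require Import all_classical all_reals all_analysis.
From mathcomp Require Import ring lra.
Import Order.TTheory GRing.Theory Num.Theory.
Local Open Scope classical_set_scope.
Local Open Scope ring_scope.
Set Implicit Arguments. Unset Strict Implicit. Unset Printing Implicit Defensive.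

(* The objective is linear in w and separable in Q = (Q_a)_a:
   obj p Q w = sum_a w_a armObj p a Q_a, where armObj p a Q = sum_i p_i D(Q || nu^i_a)
   equals s sum_x Q ln Q - sum_x Q loglik_a with s = sum_i p_i.  If s > 0, Gibbs'
   variational principle gives min_Q armObj = - s ln sum_x exp(loglik_a / s),
   attained at the Gibbs distribution; if s <= 0 the entropy term is nonnegative
   and vanishes on point masses, so min_Q armObj = min_x - loglik_a(x).  Hence
   min-max and max-min both equal max_a min_Q armObj, attained at a pure arm and
   at the per-arm minimizers.  Since 0 <= D(Q || nu) <= ln(1/eps), armObj is
   monotone in p and ln(1/eps)-Lipschitz for the l1 norm; both properties
   survive the min over Q and the max over a, and Cauchy-Schwarz turns l1
   into l2. *)

Section FiniteDistributions.
Variable R : realType.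

Lemma sup_eq_max (E : set R) x : E x -> ubound E x -> sup E = x.
Proof.
move=> Ex ub; apply/le_anti/andP; split; first by apply: ge_sup => //; exists x.
by apply: ub_le_sup => //; exists x.
Qed.

Lemma inf_eq_min (E : set R) x : E x -> lbound E x -> inf E = x.
Proof.
move=> Ex lb; apply/le_anti/andP; split; last by apply: lb_le_inf => //; exists x.
by apply: ge_inf => //; exists x.
Qed.

Lemma exists_argmax (T : finType) (t0 : T) (f : T -> R) :
  exists t, forall u, f u <= f t.
Proof. by case: (@arg_maxP _ _ _ t0 predT f isT) => t _ H; exists t => u; apply: H. Qed.

Lemma exists_argmin (T : finType) (t0 : T) (f : T -> R) :
  exists t, forall u, f t <= f u.
Proof. by case: (@arg_minP _ _ _ t0 predT f isT) => t _ H; exists t => u; apply: H. Qed.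

Lemma sup_range_max (T : finType) (f : T -> R) t :
  (forall u, f u <= f t) -> sup (range f) = f t.
Proof. by move=> H; apply: sup_eq_max; [exists t|move=> _ [u _ <-]]. Qed.

Lemma inf_range_min (T : finType) (f : T -> R) t :
  (forall u, f t <= f u) -> inf (range f) = f t.
Proof. by move=> H; apply: inf_eq_min; [exists t|move=> _ [u _ <-]]. Qed.

Lemma is_dist_inhabited (T : finType) (q : T -> R) : is_dist q -> inhabited T.
Proof.
case=> _; case: (pickP T) => [t _|T0]; first by constructor.
by rewrite big_pred0 // => /eqP; rewrite eq_sym oner_eq0.
Qed.

Lemma is_dist_le1 (T : finType) (q : T -> R) t : is_dist q -> q t <= 1.
Proof. by case=> q0 <-; rewrite (bigD1 t) //= lerDl sumr_ge0. Qed.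

Lemma convex_comb_le (T : finType) (w c : T -> R) b :
  is_dist w -> (forall u, c u <= b) -> \sum_u w u * c u <= b.
Proof.
move=> [w0 w1] cb; rewrite -[leRHS]mul1r -w1 mulr_suml.
by apply: ler_sum => u _; apply: ler_wpM2l.
Qed.

Lemma convex_comb_ge (T : finType) (w c : T -> R) b :
  is_dist w -> (forall u, b <= c u) -> b <= \sum_u w u * c u.
Proof.
move=> wd bc; rewrite -[leRHS]opprK -sumrN lerNr.
under eq_bigr do rewrite -mulrN.
by apply: convex_comb_le => // u; rewrite lerN2.
Qed.

Definition dirac_dist (T : finType) (t : T) : T -> R := fun u => (u == t)%:R.

Lemma dirac_dist_is_dist (T : finType) (t : T) : is_dist (dirac_dist t).
Proof.
split=> [u|]; first by rewrite ler0n.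
by rewrite (bigD1 t) //= big1 ?addr0 /dirac_dist ?eqxx // => u /negbTE ->.
Qed.

Lemma sum_dirac_distM (T : finType) (t : T) (c : T -> R) :
  \sum_u dirac_dist t u * c u = c t.
Proof.
rewrite (bigD1 t) //= big1 ?addr0 /dirac_dist ?eqxx ?mul1r // => u /negbTE ->.
by rewrite mul0r.
Qed.

Lemma sup_convex_comb (T : finType) (c : T -> R) t : (forall u, c u <= c t) ->
  sup [set v | exists2 w, is_dist w & v = \sum_u w u * c u] = c t.
Proof.
move=> ct; apply: sup_eq_max.
  by exists (dirac_dist t); [exact: dirac_dist_is_dist|rewrite sum_dirac_distM].
by move=> _ [w wd ->]; apply: convex_comb_le.
Qed.

Definition xlnx (x : R) := if x == 0 then 0 else x * ln x.

Definition negentropy (T : finType) (q : T -> R) := \sum_t xlnx (q t).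

Lemma negentropy_le0 (T : finType) (q : T -> R) : is_dist q -> negentropy q <= 0.
Proof.
move=> qd; apply: sumr_le0 => t _; rewrite /xlnx; case: ifP => // _.
by apply: mulr_ge0_le0; [case: qd|apply/ln_le0/is_dist_le1].
Qed.

Lemma negentropy_dirac (T : finType) (t : T) : negentropy (dirac_dist t) = 0.
Proof.
apply: big1 => u _; rewrite /xlnx /dirac_dist.
by case: (u == t); rewrite ?eqxx ?oner_eq0 ?ln1 ?mulr0.
Qed.

Lemma sub_le_xlnx (q g : R) : 0 <= q -> 0 < g -> q - g <= xlnx q - q * ln g.
Proof.
rewrite /xlnx le_eqVlt => /predU1P[<- g0|q0 g0].
  by rewrite eqxx sub0r mul0r subr0 oppr_le0 ltW.
have gq0 := divr_gt0 g0 q0.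
have ln_le_sub1 : ln (g / q) <= g / q - 1.
  by rewrite -[X in ln X](subrK 1) addrC le_ln1Dx //; lra.
have := ler_wpM2l (ltW q0) ln_le_sub1.
rewrite ln_div ?posrE // !mulrBr mulr1 [q * (g / q)]mulrC divfK ?gt_eqF //.
by move=> ?; lra.
Qed.

Lemma sumr_gt0_inhabited (T : finType) (g : T -> R) :
  inhabited T -> (forall t, 0 < g t) -> 0 < \sum_t g t.
Proof.
case=> t g0; rewrite (bigD1 t) //= ltr_wpDr //.
by apply: sumr_ge0 => u _; apply: ltW.
Qed.

Lemma gibbs_variational (T : finType) (q g : T -> R) :
  is_dist q -> (forall t, 0 < g t) ->
  - ln (\sum_t g t) <= negentropy q - \sum_t q t * ln (g t).
Proof.
move=> qd g0; have [q0 q1] := qd.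
have Z0 := sumr_gt0_inhabited (is_dist_inhabited qd) g0.
have : \sum_t (q t - g t / \sum_u g u) <=
       \sum_t (xlnx (q t) - q t * ln (g t / \sum_u g u)).
  by apply: ler_sum => t _; apply: sub_le_xlnx => //; apply: divr_gt0.
rewrite sumrB -mulr_suml divff ?gt_eqF // q1 subrr.
under eq_bigr do rewrite ln_div ?posrE // mulrBr.
rewrite sumrB sumrB -mulr_suml q1 mul1r -/(negentropy q); lra.
Qed.

Definition gibbs_dist (T : finType) (g : T -> R) : T -> R :=
  fun t => g t / \sum_u g u.

Section GibbsDistribution.
Variables (T : finType) (g : T -> R).
Hypotheses (T_inhabited : inhabited T) (g_gt0 : forall t, 0 < g t).

Let Z_gt0 : 0 < \sum_t g t. Proof. exact: sumr_gt0_inhabited. Qed.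

Lemma gibbs_dist_gt0 t : 0 < gibbs_dist g t.
Proof. exact: divr_gt0. Qed.

Lemma gibbs_dist_is_dist : is_dist (gibbs_dist g).
Proof.
split=> [t|]; first exact/ltW/gibbs_dist_gt0.
by rewrite -mulr_suml divff ?gt_eqF.
Qed.

Lemma gibbs_dist_optimal :
  negentropy (gibbs_dist g) - \sum_t gibbs_dist g t * ln (g t) = - ln (\sum_t g t).
Proof.
rewrite /negentropy -sumrB.
under eq_bigr => t _ do
  rewrite /xlnx gt_eqF ?gibbs_dist_gt0 // ln_div ?posrE // mulrBr addrAC subrr add0r.
by rewrite sumrN -mulr_suml (proj2 gibbs_dist_is_dist) mul1r.
Qed.

End GibbsDistribution.

Lemma l1_le_sqrt_dim_l2 (n : nat) (d : 'I_n -> R) :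
  \sum_i `|d i| <= Num.sqrt n%:R * Num.sqrt (\sum_i d i ^+ 2).
Proof.
rewrite -sqrtrM ?ler0n // -(ger0_norm (sumr_ge0 _ (fun i _ => normr_ge0 (d i)))).
rewrite -sqrtr_sqr ler_wsqrtr //.
have sqr_sum : (\sum_i `|d i|) ^+ 2 = \sum_i \sum_j `|d i| * `|d j|.
  by rewrite expr2 mulr_suml; apply: eq_bigr => i _; rewrite mulr_sumr.
have sum_sqr : \sum_i \sum_j (d i ^+ 2 + d j ^+ 2) = 2 * (n%:R * \sum_i d i ^+ 2).
  under eq_bigr do rewrite big_split /= sumr_const card_ord.
  by rewrite big_split /= sumr_const card_ord sumrMnl !mulr_natl mulr2n.
rewrite -(@ler_pM2l _ 2) // sqr_sum -sum_sqr mulr_sumr; apply: ler_sum => i _.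
rewrite mulr_sumr; apply: ler_sum => j _.
have := sqr_ge0 (`|d i| - `|d j|).
by rewrite sqrrB -!(real_normK (num_real (d _))); lra.
Qed.

End FiniteDistributions.

Arguments dirac_dist {R T} t.

Section ArmValues.
Variables (R : realType) (X : finType) (m K : nat) (nu : 'I_m -> 'I_K -> X -> R).
Hypothesis nu_gt0 : forall i a x, 0 < nu i a x.
Variables (x0 : X) (a0 : 'I_K).

Definition loglik (p : 'I_m -> R) a x := \sum_i p i * ln (nu i a x).

Definition armObj (p : 'I_m -> R) a (Q : X -> R) := \sum_i p i * KL Q (nu i a).

(* The closed form of min_Q armObj p a Q; [Hform] is its max over arms. *)
Definition armVal (p : 'I_m -> R) a :=
  let s := \sum_(k < m) p k in
  if 0 < s then - s * ln (\sum_(x : X) \prod_(i < m) (nu i a x) `^ (p i / s))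
  else inf (range (fun x : X => - loglik p a x)).

Definition is_dist_min (f : (X -> R) -> R) (v : R) :=
  (forall Q, is_dist Q -> v <= f Q) /\ exists2 Q, is_dist Q & f Q = v.

Lemma Hform_armVal p : Hform nu p = sup (range (armVal p)).
Proof. by rewrite /Hform /armVal; case: ifP. Qed.

Lemma KL_negentropy (Q r : X -> R) : is_dist Q -> (forall x, 0 < r x) ->
  KL Q r = negentropy Q - \sum_x Q x * ln (r x).
Proof.
move=> [Q0 _] r0; rewrite /KL /negentropy -sumrB; apply: eq_bigr => x _.
rewrite /xlnx; case: ifPn => [/eqP->|Qx0]; first by rewrite mul0r subr0.
have Qx : 0 < Q x by rewrite lt_neqAle eq_sym Qx0 Q0.
by rewrite ln_div ?posrE // mulrBr.
Qed.

Lemma armObjE p a Q : is_dist Q ->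
  armObj p a Q = (\sum_i p i) * negentropy Q - \sum_x Q x * loglik p a x.
Proof.
move=> Qd; rewrite /armObj.
under eq_bigr do rewrite KL_negentropy // mulrBr.
rewrite sumrB mulr_suml; congr (_ - _).
under eq_bigr do rewrite mulr_sumr.
rewrite exchange_big; apply: eq_bigr => x _; rewrite /loglik mulr_sumr.
by apply: eq_bigr => i _; rewrite mulrCA.
Qed.

Lemma objE p Q w : obj nu p Q w = \sum_a w a * armObj p a (Q a).
Proof.
rewrite /obj exchange_big; apply: eq_bigr => a _; rewrite /armObj mulr_sumr.
by apply: eq_bigr => i _; rewrite mulrAC -mulrA.
Qed.

Lemma prod_powR_nu p a x (s : R) : s != 0 ->
  \prod_(i < m) (nu i a x) `^ (p i / s) = expR (loglik p a x / s).
Proof.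
move=> s0; rewrite /loglik mulr_suml expR_sum; apply: eq_bigr => i _.
by rewrite /powR gt_eqF // mulrAC.
Qed.

Lemma armVal_min_pos p a : 0 < \sum_i p i -> is_dist_min (armObj p a) (armVal p a).
Proof.
rewrite /armVal; set s := \sum_i p i => s0; rewrite s0.
set g := fun x => expR (loglik p a x / s).
have -> : \sum_x \prod_i nu i a x `^ (p i / s) = \sum_x g x.
  by apply: eq_bigr => x _; rewrite prod_powR_nu ?gt_eqF.
have g0 x : 0 < g x by apply: expR_gt0.
have armObj_g Q : is_dist Q -> armObj p a Q = s * (negentropy Q - \sum_x Q x * ln (g x)).
  move=> Qd; rewrite armObjE // mulrBr; congr (_ - _).
  rewrite mulr_sumr; apply: eq_bigr => x _.
  by rewrite /g expRK mulrCA [s * _]mulrC divfK ?gt_eqF.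
have X0 : inhabited X by constructor.
split=> [Q Qd|].
  by rewrite armObj_g // mulNr -mulrN ler_pM2l // gibbs_variational.
exists (gibbs_dist g); first exact: gibbs_dist_is_dist.
rewrite armObj_g; last exact: gibbs_dist_is_dist.
by rewrite gibbs_dist_optimal // mulrN mulNr.
Qed.

Lemma armVal_min_npos p a : ~~ (0 < \sum_i p i) -> is_dist_min (armObj p a) (armVal p a).
Proof.
rewrite /armVal; set s := \sum_i p i => s0; rewrite (negbTE s0).
have [x1 x1_min] := exists_argmin x0 (fun x => - loglik p a x).
rewrite (inf_range_min x1_min); split=> [Q Qd|].
  have ent_ge0 : 0 <= s * negentropy Q by rewrite mulr_le0 ?negentropy_le0 // leNgt.
  have := convex_comb_ge Qd x1_min.
  under eq_bigr do rewrite mulrN.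
  by rewrite sumrN armObjE // -/s; lra.
exists (dirac_dist x1); first exact: dirac_dist_is_dist.
rewrite armObjE; last exact: dirac_dist_is_dist.
by rewrite negentropy_dirac mulr0 sub0r sum_dirac_distM.
Qed.

Lemma armVal_is_dist_min p a : is_dist_min (armObj p a) (armVal p a).
Proof. by case: (boolP (0 < \sum_i p i)); [exact: armVal_min_pos|exact: armVal_min_npos]. Qed.

Lemma armVal_le_armObj p a Q : is_dist Q -> armVal p a <= armObj p a Q.
Proof. exact: (proj1 (armVal_is_dist_min p a)). Qed.

Lemma exists_arm_minimizers p :
  exists2 Qs, is_Q Qs & forall a, armObj p a (Qs a) = armVal p a.
Proof.
have min_a a : exists Q, is_dist Q /\ armObj p a Q = armVal p a.
  by have [_ [Q ? ?]] := armVal_is_dist_min p a; exists Q.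
have [Qs QsP] := choice min_a.
by exists Qs => a; case: (QsP a).
Qed.

Lemma armVal_le_add p q (C : R) a :
  (forall Q, is_dist Q -> armObj p a Q <= armObj q a Q + C) ->
  armVal p a <= armVal q a + C.
Proof.
move=> pq; have [Qs Qs_dist <-] := exists_arm_minimizers q.
exact: le_trans (armVal_le_armObj p a (Qs_dist a)) (pq _ (Qs_dist a)).
Qed.

Lemma sup_obj_over_w p Q a : (forall b, armObj p b (Q b) <= armObj p a (Q a)) ->
  sup [set u | exists2 w, is_dist w & u = obj nu p Q w] = armObj p a (Q a).
Proof.
have -> : obj nu p Q = fun w => \sum_b w b * armObj p b (Q b).
  by apply/funext => w; rewrite objE.
exact: sup_convex_comb.
Qed.

Lemma inf_obj_over_Q p w : is_dist w ->
  inf [set u | exists2 Q, is_Q Q & u = obj nu p Q w] = \sum_a w a * armVal p a /\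
  exists2 Q, is_Q Q & obj nu p Q w = \sum_a w a * armVal p a.
Proof.
move=> [w0 _]; have [Qs Qs_dist QsE] := exists_arm_minimizers p.
have objQs : obj nu p Qs w = \sum_a w a * armVal p a.
  by rewrite objE; apply: eq_bigr => a _; rewrite QsE.
split; last by exists Qs.
apply: inf_eq_min; first by exists Qs.
move=> _ [Q Q_dist ->]; rewrite objE; apply: ler_sum => a _.
exact/ler_wpM2l/armVal_le_armObj.
Qed.

Lemma inf_obj_dirac p a :
  inf [set u | exists2 Q, is_Q Q & u = obj nu p Q (dirac_dist a)] = armVal p a.
Proof. by rewrite (proj1 (inf_obj_over_Q _ (dirac_dist_is_dist _ a))) sum_dirac_distM. Qed.

Section ArmMaximizer.
Variables (p : 'I_m -> R) (a1 : 'I_K).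
Hypothesis a1_max : forall b, armVal p b <= armVal p a1.

Lemma sup_obj_arm_minimizers Qs : (forall a, armObj p a (Qs a) = armVal p a) ->
  sup [set u | exists2 w, is_dist w & u = obj nu p Qs w] = armVal p a1.
Proof. by move=> QsE; rewrite (@sup_obj_over_w _ _ a1) QsE // => b; rewrite !QsE. Qed.

Lemma Hplus_eq_max_armVal : Hplus nu p = armVal p a1.
Proof.
have [Qs Qs_dist QsE] := exists_arm_minimizers p.
apply: inf_eq_min; first by exists Qs; rewrite ?sup_obj_arm_minimizers.
move=> _ [Q Q_dist ->]; have [b b_max] := exists_argmax a0 (fun b => armObj p b (Q b)).
rewrite (sup_obj_over_w b_max).
exact: le_trans (armVal_le_armObj _ _ (Q_dist a1)) (b_max a1).
Qed.

Lemma Hminus_eq_max_armVal : Hminus nu p = armVal p a1.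
Proof.
apply: sup_eq_max.
  by exists (dirac_dist a1); [exact: dirac_dist_is_dist|rewrite inf_obj_dirac].
by move=> _ [w w_dist ->]; rewrite (proj1 (inf_obj_over_Q _ w_dist)) convex_comb_le.
Qed.

Lemma Hform_eq_max_armVal : Hform nu p = armVal p a1.
Proof. by rewrite Hform_armVal (sup_range_max a1_max). Qed.

End ArmMaximizer.

Lemma exists_max_armVal p : exists a, forall b, armVal p b <= armVal p a.
Proof. exact: exists_argmax. Qed.

Lemma minimax_saddle p :
  (exists2 Q, is_Q Q &
     Hplus nu p = sup [set u | exists2 w, is_dist w & u = obj nu p Q w]) /\
  (forall Q, is_Q Q -> exists2 w, is_dist w &
     obj nu p Q w = sup [set u | exists2 w', is_dist w' & u = obj nu p Q w']) /\
  (exists2 w, is_dist w &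
     Hminus nu p = inf [set u | exists2 Q, is_Q Q & u = obj nu p Q w]) /\
  (forall w, is_dist w -> exists2 Q, is_Q Q &
     obj nu p Q w = inf [set u | exists2 Q', is_Q Q' & u = obj nu p Q' w]) /\
  Hplus nu p = Hminus nu p /\ Hplus nu p = Hform nu p.
Proof.
have [a1 a1_max] := exists_max_armVal p.
have [Qs Qs_dist QsE] := exists_arm_minimizers p.
rewrite (Hplus_eq_max_armVal a1_max) (Hminus_eq_max_armVal a1_max).
rewrite (Hform_eq_max_armVal a1_max).
split; first by exists Qs; rewrite ?(sup_obj_arm_minimizers a1_max).
split.
  move=> Q _; have [b b_max] := exists_argmax a0 (fun b => armObj p b (Q b)).
  exists (dirac_dist b); first exact: dirac_dist_is_dist.
  by rewrite (sup_obj_over_w b_max) objE sum_dirac_distM.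
split.
  by exists (dirac_dist a1); [exact: dirac_dist_is_dist|rewrite inf_obj_dirac].
split; last by [].
by move=> w w_dist; have [-> [Q ? objQ]] := inf_obj_over_Q p w_dist; exists Q.
Qed.

Lemma Hplus_le_add p q (C : R) : (forall a, armVal p a <= armVal q a + C) ->
  Hplus nu p <= Hplus nu q + C.
Proof.
move=> pq; have [a a_max] := exists_max_armVal p; have [b b_max] := exists_max_armVal q.
rewrite (Hplus_eq_max_armVal a_max) (Hplus_eq_max_armVal b_max).
by apply: le_trans (pq a) _; rewrite lerD2r.
Qed.

Section KLBounds.
Hypothesis nu_dist : forall i a, is_dist (nu i a).
Variable eps : R.
Hypotheses (eps_gt0 : 0 < eps) (nu_ge_eps : forall i a x, eps <= nu i a x).

Lemma KL_ge0 Q i a : is_dist Q -> 0 <= KL Q (nu i a).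
Proof.
move=> Qd; rewrite KL_negentropy //; have := gibbs_variational Qd (nu_gt0 i a).
by rewrite (proj2 (nu_dist i a)) ln1 oppr0.
Qed.

Lemma KL_le_ln_inv_eps Q i a : is_dist Q -> KL Q (nu i a) <= ln eps^-1.
Proof.
move=> Qd; rewrite KL_negentropy // lnV ?posrE //.
have : ln eps <= \sum_x Q x * ln (nu i a x).
  by apply: convex_comb_ge => // x; rewrite ler_ln ?posrE.
by have := negentropy_le0 Qd; lra.
Qed.

Lemma armObj_lipschitz p q a Q : is_dist Q ->
  armObj p a Q <= armObj q a Q + ln eps^-1 * \sum_i `|p i - q i|.
Proof.
move=> Qd; rewrite addrC -lerBlDr /armObj -sumrB mulr_sumr; apply: ler_sum => i _.
rewrite -mulrBl mulrC; apply: le_trans (ler_wpM2l (KL_ge0 _ _ Qd) (ler_norm _)) _.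
by apply: ler_wpM2r; [exact: normr_ge0|exact: KL_le_ln_inv_eps].
Qed.

Lemma Hplus_lipschitz_l1 p q :
  `|Hplus nu p - Hplus nu q| <= ln eps^-1 * \sum_i `|p i - q i|.
Proof.
have lip p' q' : Hplus nu p' <= Hplus nu q' + ln eps^-1 * \sum_i `|p' i - q' i|.
  by apply: Hplus_le_add => a; apply: armVal_le_add => Q Qd; apply: armObj_lipschitz.
have := lip q p; under eq_bigr do rewrite distrC.
by have := lip p q; rewrite ler_norml; lra.
Qed.

Lemma Hplus_mono p q : (forall i, p i <= q i) -> Hplus nu p <= Hplus nu q.
Proof.
move=> pq; rewrite -[leRHS]addr0; apply: Hplus_le_add => a.
apply: armVal_le_add => Q Qd; rewrite addr0.
by apply: ler_sum => i _; rewrite ler_wpM2r ?KL_ge0.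
Qed.

End KLBounds.

End ArmValues.

Theorem mainTheorem4 (R : realType) (X : finType) (m K : nat)
    (nu : 'I_m -> 'I_K -> X -> R) (eps : R) :
  (2 <= m)%N -> (0 < K)%N ->
  0 < eps -> eps < 1 ->
  (forall i a, is_dist (nu i a)) ->
  (forall i a x, eps <= nu i a x) ->
  (forall p : 'I_m -> R,
     (* the min over Q and the inner max over w are attained *)
     (exists2 Q, is_Q Q &
        Hplus nu p = sup [set u | exists2 w, is_dist w & u = obj nu p Q w]) /\
     (forall Q, is_Q Q -> exists2 w, is_dist w &
        obj nu p Q w = sup [set u | exists2 w', is_dist w' & u = obj nu p Q w']) /\
     (* the max over w and the inner min over Q are attained *)
     (exists2 w, is_dist w &
        Hminus nu p = inf [set u | exists2 Q, is_Q Q & u = obj nu p Q w]) /\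
     (forall w, is_dist w -> exists2 Q, is_Q Q &
        obj nu p Q w = inf [set u | exists2 Q', is_Q Q' & u = obj nu p Q' w]) /\
     (* minimax equality and closed form *)
     Hplus nu p = Hminus nu p /\ Hplus nu p = Hform nu p) /\
  (* Lipschitz continuity with constant sqrt(m) log(1/eps) (Euclidean norm) *)
  (forall p q : 'I_m -> R,
     `|Hplus nu p - Hplus nu q| <=
       Num.sqrt (m%:R) * ln (eps^-1) * Num.sqrt (\sum_(i < m) (p i - q i) ^+ 2)) /\
  (* non-decreasing in each coordinate *)
  (forall (i : 'I_m) (p q : 'I_m -> R),
     (forall j, j != i -> p j = q j) -> p i <= q i -> Hplus nu p <= Hplus nu q).
Proof.
move=> m_ge2 K_gt0 eps_gt0 eps_lt1 nu_dist nu_ge_eps.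
have nu_gt0 i a x : 0 < nu i a x by apply: lt_le_trans (nu_ge_eps i a x).
pose a0 : 'I_K := Ordinal K_gt0.
have [x0] := is_dist_inhabited (nu_dist (Ordinal (ltnW m_ge2)) a0).
split; first exact: minimax_saddle nu_gt0 x0 a0.
split=> [p q|i p q eq_pq le_pqi].
  apply: le_trans (Hplus_lipschitz_l1 nu_gt0 x0 a0 nu_dist eps_gt0 nu_ge_eps p q) _.
  have ln_inv_eps_gt0 : 0 < ln eps^-1 by rewrite ln_gt0 // invf_gt1.
  by rewrite (mulrC (Num.sqrt _)) -mulrA ler_pM2l // (l1_le_sqrt_dim_l2 (fun i => p i - q i)).
apply: (Hplus_mono nu_gt0 x0 a0 nu_dist) => j.
by case: (eqVneq j i) => [->|/eq_pq ->].
Qed.
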